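(* Let $n\ge1$, $a_{i0}\ge0$, $a_{ij}\ge 0$ and $\pi_i>0$ for $i,j=1,\ldots,n$, let $\varepsilon>0$, and let $\mu_1,\ldots,\mu_n$ satisfy $\mu_i\ge\sum_{j\ne i}(a_{ij}+a_{ji})/2$. For $u\in(0,\infty)^n$ define $$A_{ij}(u)=\delta_{ij}a_{i0}+\delta_{ij}\sum_{k=1}^na_{ik}u_k+a_{ij}u_i,\qquad H_{ij}(u)=\delta_{ij}\frac{\pi_i}{u_i^{2}},$$ $$H_{\varepsilon,ij}(u)=\delta_{ij}\Big(\frac{\pi_i}{u_i^2}+\frac{\varepsilon}{u_i}\Big),\qquad A_\varepsilon(u)=A(u)+\varepsilon A^0(u),\quad A^0_{ij}(u)=\delta_{ij}\frac{\mu_i}{\pi_i}u_i^2.$$ Then for all $z\in\mathbb{R}^n$ and $u\in(0,\infty)^n$, $$z^TH_\varepsilon(u)A_\varepsilon(u)z\ge z^TH(u)A(u)z+2\varepsilon\sum_{i=1}^na_{ii}z_i^2+\varepsilon^2\sum_{i=1}^n\frac{\mu_i}{\pi_i}u_iz_i^2.$$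
   Context: $\delta_{ij}$ is the Kronecker symbol. $H_\varepsilon(u)$ is the Hessian of $h(u)+\varepsilon\sum_iu_i(\log u_i-1)$ with $h(u)=\sum_i\pi_i(u_i-\log u_i)$. *)

From mathcomp Require Import all_boot all_order all_algebra.
Set Implicit Arguments. Unset Strict Implicit. Unset Printing Implicit Defensive.
Import Order.TTheory GRing.Theory Num.Theory.
Local Open Scope ring_scope.

Definition Amat (R : realFieldType) (n : nat) (a : 'M[R]_n) (a0 u : 'cV[R]_n)
  : 'M[R]_n :=
  \matrix_(i, j) ((i == j)%:R * a0 i 0 + (i == j)%:R * (\sum_k a i k * u k 0)
                  + a i j * u i 0).

Definition Hmat (R : realFieldType) (n : nat) (pi u : 'cV[R]_n) : 'M[R]_n :=
  \matrix_(i, j) ((i == j)%:R * (pi i 0 / u i 0 ^+ 2)).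

Definition Hepsmat (R : realFieldType) (n : nat) (eps : R) (pi u : 'cV[R]_n)
  : 'M[R]_n :=
  \matrix_(i, j) ((i == j)%:R * (pi i 0 / u i 0 ^+ 2 + eps / u i 0)).

Definition A0mat (R : realFieldType) (n : nat) (mu pi u : 'cV[R]_n) : 'M[R]_n :=
  \matrix_(i, j) ((i == j)%:R * (mu i 0 / pi i 0 * u i 0 ^+ 2)).

Definition Aepsmat (R : realFieldType) (n : nat) (eps : R) (a : 'M[R]_n)
  (a0 mu pi u : 'cV[R]_n) : 'M[R]_n :=
  Amat a a0 u + eps *: A0mat mu pi u.

Definition qform (R : realFieldType) (n : nat) (M : 'M[R]_n) (z : 'cV[R]_n) : R :=
  (z^T *m M *m z) 0 0.

From mathcomp Require Import all_boot all_order all_algebra ring lra.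
Import Order.TTheory GRing.Theory Num.Theory.
Local Open Scope ring_scope.

(* Write H_eps = H + eps D with D = diag(1/u_i) and A_eps = A + eps A^0.  Then
   z^T H_eps A_eps z = z^T H A z + eps (z^T D A z + z^T H A^0 z) + eps^2 z^T D A^0 z,
   where H A^0 = diag(mu_i) and D A^0 = diag(mu_i u_i / pi_i) are diagonal, and
   D A = diag((a_i0 + sum_k a_ik u_k) / u_i) + (a_ij) has diagonal part at least a_ii.
   Off the diagonal, a_ij z_i z_j >= - a_ij (z_i^2 + z_j^2) / 2, and the hypothesis
   on mu absorbs these losses, leaving z^T D A z + sum_i mu_i z_i^2 >= 2 sum_i a_ii z_i^2. *)

Section QuadraticForms.
Context {R : realFieldType} {n : nat}.
Implicit Types (M N : 'M[R]_n) (z : 'cV[R]_n).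

Lemma qformE M z : qform M z = \sum_i \sum_j z i 0 * M i j * z j 0.
Proof.
rewrite /qform mxE exchange_big; apply: eq_bigr => j _.
by rewrite mxE big_distrl; apply: eq_bigr => i _; rewrite !mxE.
Qed.

Lemma qformD M N z : qform (M + N) z = qform M z + qform N z.
Proof. by rewrite /qform mulmxDr mulmxDl mxE. Qed.

Lemma qformZ (c : R) M z : qform (c *: M) z = c * qform M z.
Proof. by rewrite /qform -scalemxAr -scalemxAl mxE. Qed.

Lemma diag_mx_deltaE (d : 'I_n -> R) :
  \matrix_(i, j) ((i == j)%:R * d i) = diag_mx (\row_i d i).
Proof. by apply/matrixP => i j; rewrite !mxE mulr_natl. Qed.

Lemma qform_diag (d : 'I_n -> R) z :
  qform (diag_mx (\row_i d i)) z = \sum_i d i * z i 0 ^+ 2.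
Proof.
rewrite /qform mul_mx_diag mxE; apply: eq_bigr => i _; rewrite !mxE; ring.
Qed.

Lemma qform_mulmx_perturb (c : R) (H D A B : 'M[R]_n) z :
  qform ((H + c *: D) *m (A + c *: B)) z =
  qform (H *m A) z + c * (qform (D *m A) z + qform (H *m B) z)
  + c ^+ 2 * qform (D *m B) z.
Proof.
rewrite mulmxDl !mulmxDr -!scalemxAl -!scalemxAr scalerA !qformD !qformZ.
ring.
Qed.

Lemma qform_ge_diag_nonneg (a : 'M[R]_n) z : (forall i j, 0 <= a i j) ->
  \sum_i a i i * z i 0 ^+ 2 <=
  qform a z + \sum_i (\sum_(j | j != i) (a i j + a j i) / 2) * z i 0 ^+ 2.
Proof.
move=> a_ge0.
have swap : \sum_i \sum_(j | j != i) a j i * z i 0 ^+ 2 / 2 =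
            \sum_i \sum_(j | j != i) a i j * z j 0 ^+ 2 / 2.
  rewrite (exchange_big_dep xpredT) //=; apply: eq_bigr => i _.
  by apply: eq_bigl => j; rewrite eq_sym.
have split_c : \sum_i (\sum_(j | j != i) (a i j + a j i) / 2) * z i 0 ^+ 2 =
    \sum_i \sum_(j | j != i) a i j * z i 0 ^+ 2 / 2 +
    \sum_i \sum_(j | j != i) a j i * z i 0 ^+ 2 / 2.
  rewrite -big_split; apply: eq_bigr => i _ /=.
  rewrite big_distrl -big_split; apply: eq_bigr => j _ /=; ring.
rewrite split_c swap qformE -!big_split; apply: ler_sum => i _ /=.
rewrite (bigD1 i) //= -addrA -!big_split /=.
rewrite [X in _ <= X + _](_ : _ = a i i * z i 0 ^+ 2) ?lerDl; last by ring.
apply: sumr_ge0 => j _.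
have := mulr_ge0 (a_ge0 i j) (sqr_ge0 (z i 0 + z j 0)); nra.
Qed.

End QuadraticForms.

Section CrossDiffusionMatrices.
Context {R : realFieldType} {n : nat} {a : 'M[R]_n} {a0 pi mu u : 'cV[R]_n}.
Hypotheses (a0_ge0 : forall i, 0 <= a0 i 0) (a_ge0 : forall i j, 0 <= a i j).
Hypotheses (pi_gt0 : forall i, 0 < pi i 0) (u_gt0 : forall i, 0 < u i 0).
Hypothesis mu_ge : forall i, mu i 0 >= \sum_(j | j != i) (a i j + a j i) / 2.

Let rate i := a0 i 0 + \sum_k a i k * u k 0.
Let Dinv := diag_mx (\row_i (u i 0)^-1).

Let u_neq0 i : u i 0 != 0. Proof. by rewrite gt_eqF. Qed.
Let pi_neq0 i : pi i 0 != 0. Proof. by rewrite gt_eqF. Qed.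

Lemma Hmat_diag : Hmat pi u = diag_mx (\row_i (pi i 0 / u i 0 ^+ 2)).
Proof. exact: diag_mx_deltaE. Qed.

Lemma A0mat_diag : A0mat mu pi u = diag_mx (\row_i (mu i 0 / pi i 0 * u i 0 ^+ 2)).
Proof. exact: diag_mx_deltaE. Qed.

Lemma Hepsmat_split (eps : R) : Hepsmat eps pi u = Hmat pi u + eps *: Dinv.
Proof. by apply/matrixP => i j; rewrite !mxE mulr_natl; case: (i == j); ring. Qed.

Lemma Amat_split : Amat a a0 u = diag_mx (\row_i rate i) + diag_mx (\row_i u i 0) *m a.
Proof.
apply/matrixP => i j; rewrite mul_diag_mx !mxE /rate mulr_natl.
by case: (i == j); ring.
Qed.

Lemma Hmat_mul_A0mat : Hmat pi u *m A0mat mu pi u = diag_mx (\row_i mu i 0).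
Proof.
rewrite Hmat_diag A0mat_diag mulmx_diag; congr diag_mx.
by apply/rowP => i; rewrite !mxE; field; rewrite u_neq0 pi_neq0.
Qed.

Lemma invu_mul_A0mat : Dinv *m A0mat mu pi u = diag_mx (\row_i (mu i 0 / pi i 0 * u i 0)).
Proof.
rewrite A0mat_diag mulmx_diag; congr diag_mx.
by apply/rowP => i; rewrite !mxE; field; rewrite u_neq0 pi_neq0.
Qed.

Lemma invu_mul_Amat : Dinv *m Amat a a0 u = diag_mx (\row_i (rate i / u i 0)) + a.
Proof.
rewrite Amat_split mulmxDr mulmxA !mulmx_diag.
have -> : \row_i ((\row_i (u i 0)^-1) 0 i * (\row_i u i 0) 0 i) = const_mx 1.
  by apply/rowP => i; rewrite !mxE mulVf.
rewrite diag_const_mx mul1mx; congr (diag_mx _ + _).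
by apply/rowP => i; rewrite !mxE mulrC.
Qed.

Lemma diag_le_rate_over_u i : a i i <= rate i / u i 0.
Proof.
rewrite ler_pdivlMr // /rate (bigD1 i) //= addrCA lerDl.
by apply: addr_ge0 => //; apply: sumr_ge0 => k _; rewrite mulr_ge0 // ltW.
Qed.

Lemma qform_invu_Amat_ge (z : 'cV[R]_n) :
  2 * \sum_i a i i * z i 0 ^+ 2 <=
  qform (Dinv *m Amat a a0 u) z + \sum_i mu i 0 * z i 0 ^+ 2.
Proof.
rewrite invu_mul_Amat qformD qform_diag.
have rate_term : \sum_i a i i * z i 0 ^+ 2 <= \sum_i rate i / u i 0 * z i 0 ^+ 2.
  by apply: ler_sum => i _; rewrite ler_wpM2r ?sqr_ge0 ?diag_le_rate_over_u.
have mu_term : \sum_i (\sum_(j | j != i) (a i j + a j i) / 2) * z i 0 ^+ 2 <=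
               \sum_i mu i 0 * z i 0 ^+ 2.
  by apply: ler_sum => i _; rewrite ler_wpM2r ?sqr_ge0.
have := qform_ge_diag_nonneg a z a_ge0; lra.
Qed.

End CrossDiffusionMatrices.

Theorem lemma4 (R : realFieldType) (n : nat) (a : 'M[R]_n)
  (a0 pi mu : 'cV[R]_n) (eps : R) :
  (0 < n)%N ->
  (forall i, 0 <= a0 i 0) ->
  (forall i j, 0 <= a i j) ->
  (forall i, 0 < pi i 0) ->
  0 < eps ->
  (forall i, mu i 0 >= \sum_(j | j != i) (a i j + a j i) / 2) ->
  forall (z u : 'cV[R]_n), (forall i, 0 < u i 0) ->
    qform (Hepsmat eps pi u *m Aepsmat eps a a0 mu pi u) z >=
    qform (Hmat pi u *m Amat a a0 u) z
    + 2 * eps * (\sum_i a i i * z i 0 ^+ 2)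
    + eps ^+ 2 * (\sum_i mu i 0 / pi i 0 * u i 0 * z i 0 ^+ 2).
Proof.
move=> _ a0_ge0 a_ge0 pi_gt0 eps_gt0 mu_ge z u u_gt0.
rewrite Hepsmat_split /Aepsmat qform_mulmx_perturb.
rewrite Hmat_mul_A0mat // invu_mul_A0mat // !qform_diag.
have := ler_wpM2l (ltW eps_gt0) (qform_invu_Amat_ge a0_ge0 a_ge0 u_gt0 mu_ge z).
lra.
Qed.
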